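(* In the model described in the context, if the threshold satisfies $t\le f$ (i.e. $t$ records from distinct objects suffice to create an evidence), then the a-audit cannot satisfy weak accuracy.
   Context: Model. An asynchronous system has client processes (writers, readers, auditors) and $n$ storage objects $o_1,\dots,o_n$. Each $o_k$ is a loggable read/write register with a log $L_k$. Its rw-read() returns the stored block and appends $\langle p_r,\mathit{label}(b)\rangle$ to $L_k$, where $p_r$ is the reader and $\mathit{label}(b)$ identifies the value from which $b$ was derived; rw-getLog() returns $L_k$. A register over values $\mathbb{V}$ is emulated by information dispersal. An a-write($v$) stores block $b_{v_k}$ of $v$ at $o_k$, and any $\tau$ distinct blocks of $v$ recover $v$. Faults. At most $f$ storage objects are faulty, and a faulty object may, among other behaviours, report in its log records of read operations that never occurred (for arbitrary readers and values). Providing set $P_{p_r,v}$: the set of objects that received a write of $b_{v_k}$ and responded $b_{v_k}$ to a read request of $p_r$. Audit. An a-audit collects logs from an auditing quorum of $n-f$ objects and returns a set $E_A$ of evidences. An evidence $\mathcal{E}_{p_r,v}$ is created (and reported) once at least $t$ records $\langle p_r,\mathit{label}(v)\rangle$ from distinct objects are collected. Weak accuracy: for every correct reader $p_r$ that never invoked an a-read before the audit (so $P_{p_r,v}=\varnothing$), $\mathcal{E}_{p_r,v}\notin E_A$ for all $v$. *)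

From mathcomp Require Import all_boot.
Set Implicit Arguments. Unset Strict Implicit. Unset Printing Implicit Defensive.

(* An (abstracted) execution of the system, as seen up to the moment of an
   a-audit, with storage objects o_1..o_n represented by 'I_n.
   - [faulty]  : the set of faulty storage objects;
   - [reads p k v] : a read operation of reader p actually occurred at object
     o_k, and o_k responded with the block of value v (i.e. o_k is in the
     providing set P_{p,v});
   - [log k p v] : the log L_k, as returned by rw-getLog(), contains the record
     <p, label(v)> (values are identified with their labels). *)
Record execution (n : nat) (Reader Value : Type) := Exec {
  faulty : {set 'I_n};
  reads  : Reader -> 'I_n -> Value -> Prop;
  log    : 'I_n -> Reader -> Value -> bool
}.

(* Faulty objects may log arbitrary
   records (records of reads that never occurred, for arbitrary readers and
   values). *)
Definition admissible n Reader Value (f : nat) (e : execution n Reader Value) :=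
  #|faulty e| <= f /\
  forall k, k \notin faulty e -> forall p v, log e k p v -> reads e p k v.

(* Reader p invoked some a-read before the audit (some object received its
   read request). If p never invoked an a-read, no read of p occurred, so all
   providing sets P_{p,v} are empty. *)
Definition invoked n Reader Value (e : execution n Reader Value) (p : Reader) :=
  exists k v, reads e p k v.

Definition auditing_quorum n (f : nat) (Q : {set 'I_n}) := #|Q| = n - f.

(* The a-audit with threshold t: the evidence E_{p,v} is in E_A iff at least
   t records <p, label(v)> were collected from distinct objects of the
   auditing quorum Q. *)
Definition in_EA n Reader Value (t : nat) (e : execution n Reader Value)
  (Q : {set 'I_n}) (p : Reader) (v : Value) : Prop :=
  t <= #|[set k in Q | log e k p v]|.

(* Weak accuracy of the threshold-t a-audit: in every admissible execution,
   whatever auditing quorum answers, no evidence E_{p,v} is reported for a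
   reader p that never invoked an a-read. (Readers are not faulty in this
   abstraction, so every reader is correct.) *)
Definition weak_accuracy (Reader Value : Type) (n f t : nat) : Prop :=
  forall (e : execution n Reader Value) (Q : {set 'I_n}),
    admissible f e -> auditing_quorum f Q ->
    forall p, ~ invoked e p -> forall v, ~ in_EA t e Q p v.

From mathcomp Require Import all_boot.

(* Threshold t <= f is too low: f faulty objects can forge t records
   <p, label(v)> for a reader p that never read anything.  An auditing quorum
   has n - f >= t members, so it may contain all forgers; the audit then
   collects the t forged records and reports the evidence E_{p,v}. *)

Lemma card_set_ltn n m : m <= n -> #|[set k : 'I_n | k < m]| = m.
Proof.
move=> le_mn.
have -> : [set k : 'I_n | k < m] = widen_ord le_mn @: [set: 'I_m].
  apply/setP => k; rewrite inE; apply/idP/imsetP => [lt_km | [j _ ->]].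
    by exists (Ordinal lt_km) => //; apply: val_inj.
  by rewrite /= ltn_ord.
rewrite card_imset ?cardsT ?card_ord // => i j /(congr1 val) eq_ij.
exact: val_inj.
Qed.

Lemma set_ltn_subset n m1 m2 :
  m1 <= m2 -> [set k : 'I_n | k < m1] \subset [set k : 'I_n | k < m2].
Proof. by move=> le_m; apply/subsetP => k; rewrite !inE => /leq_trans; apply. Qed.

Section Forgery.

Variables (n : nat) (Reader Value : Type).

Definition forging_execution (F : {set 'I_n}) : execution n Reader Value :=
  Exec F (fun _ _ _ => False) (fun k _ _ => k \in F).

Lemma forging_admissible f (F : {set 'I_n}) :
  #|F| <= f -> admissible f (forging_execution F).
Proof. by move=> le_Ff; split=> // k /negP. Qed.

Lemma forging_not_invoked (F : {set 'I_n}) (p : Reader) :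
  ~ invoked (forging_execution F) p.
Proof. by case=> k [v []]. Qed.

Lemma forging_in_EA t (F Q : {set 'I_n}) (p : Reader) (v : Value) :
  F \subset Q -> t <= #|F| -> in_EA t (forging_execution F) Q p v.
Proof.
move=> sub_FQ le_tF; rewrite /in_EA.
have -> : [set k in Q | log (forging_execution F) k p v] = Q :&: F.
  by apply/setP => k; rewrite !inE.
by rewrite (setIidPr sub_FQ).
Qed.

Lemma forgery_breaks_weak_accuracy f t (F Q : {set 'I_n}) (p : Reader) (v : Value) :
  #|F| <= f -> t <= #|F| -> F \subset Q -> auditing_quorum f Q ->
  ~ weak_accuracy Reader Value n f t.
Proof.
move=> le_Ff le_tF sub_FQ quorumQ WA.
apply: (WA _ _ (forging_admissible f F le_Ff) quorumQ p (forging_not_invoked F p) v).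
exact: forging_in_EA.
Qed.

End Forgery.

Theorem lemma3 (Reader Value : Type) (r0 : Reader) (v0 : Value) (n f t : nat) :
  t <= f -> t + f <= n -> ~ weak_accuracy Reader Value n f t.
Proof.
move=> le_tf le_tfn.
have le_fn : f <= n := leq_trans (leq_addl t f) le_tfn.
have le_t_nf : t <= n - f by rewrite leq_subRL // addnC.
have le_tn : t <= n := leq_trans le_t_nf (leq_subr f n).
apply: (@forgery_breaks_weak_accuracy n Reader Value f t
          [set k : 'I_n | k < t] [set k : 'I_n | k < n - f] r0 v0).
- by rewrite card_set_ltn.
- by rewrite card_set_ltn.
- exact: set_ltn_subset.
- exact: card_set_ltn (leq_subr f n).
Qed.
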